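(* Consider a $2\times N$ switch with traffic pattern consisting of one broadcast flow from input 1 to all $N$ outputs with rate $r_0$ and, for each $i\in[N]$, a unicast from input 2 to output $i$ with rate $r_i$. With fanout splitting but no coding, a speedup of at least $1.5-\frac1N$ is needed to sustain all admissible traffic; i.e. if $s$ is such that $\frac1s\mathbf r\in\mathbf R_{fs}$ for every admissible $\mathbf r$, then $s\ge 1.5-\frac1N$.
   Context: Admissible: $r_i\ge0$ for all $i$, $r_0\le 1$, $\sum_{i=1}^N r_i\le1$, and $r_0+r_i\le1$ for $i\in[N]$. $\mathbf R_{fs}$ is the rate region with fanout splitting but no coding: the set of rational rate vectors for which there is a frame-based schedule (a fixed sequence of $F$ slot-configurations repeated every frame, with each $r_iF$ integer) in which each slot every input idles or sends one original uncoded packet of one of its flows to a subset of that flow's fanout, each output receives from at most one input, and for every flow and frame $n\ge1$ the oldest $rF$ packets ($r$ the flow's rate) queued at the end of frame $n-1$ are delivered to all outputs of the fanout by the end of frame $n$ (all of them if fewer). A switch with speedup $s$ can go through $s$ configurations per slot, so an admissible $\mathbf r$ is sustainable with speedup $s$ iff $\frac1s\mathbf r\in\mathbf R_{fs}$. *)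

From mathcomp Require Import all_boot all_order all_algebra.
Set Implicit Arguments. Unset Strict Implicit. Unset Printing Implicit Defensive.
Import Order.TTheory GRing.Theory Num.Theory.
Local Open Scope ring_scope.

(* 2 x N switch.  Input 1 carries one broadcast flow (flow 0) with fanout
   all N outputs, rate r0.  Input 2 carries, for each output i : 'I_N,
   a unicast flow to output i with rate r i. *)

Definition admissible (N : nat) (r0 : rat) (r : 'I_N -> rat) : Prop :=
  [/\ 0 <= r0, r0 <= 1, (forall i, 0 <= r i),
      \sum_(i < N) r i <= 1 & (forall i, r0 + r i <= 1)].

(* In slot t:
   - [bc t = None] : input 1 idles;
     [bc t = Some (k, S)] : input 1 sends (uncoded) packet number k of the
     broadcast flow (packets of the frame numbered 0,1,...) to the outputs in S;
   - [uc t = None] : input 2 idles;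
     [uc t = Some (j, k)] : input 2 sends packet number k of the unicast
     flow to output j, to output j.
   Each output receives from at most one input per slot. *)
Definition valid_frame (N F : nat) (bc : 'I_F -> option (nat * {set 'I_N}))
    (uc : 'I_F -> option ('I_N * nat)) : Prop :=
  forall t k S j p, bc t = Some (k, S) -> uc t = Some (j, p) -> j \notin S.

Definition frame_delivers (N F : nat) (bc : 'I_F -> option (nat * {set 'I_N}))
    (uc : 'I_F -> option ('I_N * nat)) (n0 : nat) (n : 'I_N -> nat) : Prop :=
  (forall k, (k < n0)%N -> forall j : 'I_N,
      exists t S, bc t = Some (k, S) /\ j \in S) /\
  (forall j : 'I_N, forall k, (k < n j)%N -> exists t, uc t = Some (j, k)).

(* R_fs : rational rate vectors admitting a frame-based schedule with
   fanout splitting and no coding: a frame length F > 0 with every r F an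
   integer, and a fixed sequence of F slot configurations that, in each
   frame, delivers the r F (oldest queued) packets of each flow to all the
   outputs of its fanout. *)
Definition in_Rfs (N : nat) (r0 : rat) (r : 'I_N -> rat) : Prop :=
  exists (F : nat) (n0 : nat) (n : 'I_N -> nat),
    [/\ (0 < F)%N, r0 * F%:R = n0%:R, (forall i, r i * F%:R = (n i)%:R) &
        exists bc uc, valid_frame bc uc /\ @frame_delivers N F bc uc n0 n].

(* Charge every packet of a frame to the two inputs.  A broadcast packet that
   is never sent to all N outputs at once occupies input 1 in at least two
   slots, because the fanout of its first slot misses some output; a packet
   sent to all outputs in one slot occupies input 1 there and, every output
   being busy, also blocks input 2.  Hence 2 n0 + sum_j n_j <= 2 F, i.e.
   2 r0 + sum_j r_j <= 2 on R_fs, and the admissible vector r0 = 1 - 1/N,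
   r_j = 1/N scaled by 1/s gives (3 - 2/N) / s <= 2. *)
From mathcomp Require Import all_boot all_order all_algebra.
From mathcomp Require Import ring lra.
Import Order.TTheory GRing.Theory Num.Theory.

Set Implicit Arguments.
Unset Strict Implicit.

Lemma sum_nat_of_bool (I : finType) (P : pred I) : \sum_i (P i : nat) = #|P|.
Proof. by rewrite -sum1_card [RHS]big_mkcond. Qed.

Lemma sum_eq_Some_le (T : eqType) (r : seq T) (o : option T) :
  uniq r -> \sum_(x <- r) (o == Some x) <= (o != None).
Proof.
case: o => [y|] r_uniq; last by rewrite big1.
rewrite -big_mkcond sum1_count (@eq_count _ _ (pred1 y)) => [|x].
  by rewrite count_uniq_mem ?leq_b1.
by rewrite /= eq_sym.
Qed.

Lemma sum_ord_le (F : nat) (E : 'I_F -> nat) : (forall t, E t <= 1) -> \sum_t E t <= F.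
Proof. by move=> E_le1; rewrite -[X in _ <= X]card_ord -sum1_card leq_sum. Qed.

Lemma leq_mul_sum_nat (m c : nat) (E : nat -> nat) :
  (forall k, k < m -> c <= E k) -> m * c <= \sum_(0 <= k < m) E k.
Proof.
move=> E_ge; rewrite -[m in m * c]subn0 -sum_nat_const_nat.
rewrite big_nat_cond [X in _ <= X]big_nat_cond.
by apply: leq_sum => k /andP[/andP[_ lt_k_m] _]; apply: E_ge.
Qed.

Section FrameCount.
Variables (N F : nat) (bc : 'I_F -> option (nat * {set 'I_N}))
  (uc : 'I_F -> option ('I_N * nat)).

Definition bc_packet t : option nat := omap fst (bc t).

Definition full_bc_packet t : option nat :=
  if bc t is Some (k, fanout) then
    (if fanout == [set: 'I_N] then Some k else None)
  else None.

Definition uc_packet j t : option nat :=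
  if uc t is Some (j', k) then (if j' == j then Some k else None) else None.

Lemma bc_packet_cost (N_gt0 : 0 < N) k :
    (forall j : 'I_N, exists t S, bc t = Some (k, S) /\ j \in S) ->
  2 <= \sum_t (bc_packet t == Some k) + \sum_t (full_bc_packet t == Some k).
Proof.
move=> delivered; rewrite !sum_nat_of_bool.
have [t1 [S1 [bc_t1 _]]] := delivered (Ordinal N_gt0).
have t1_k : t1 \in [pred t | bc_packet t == Some k] by rewrite inE /bc_packet bc_t1.
have [S1_full | /subsetPn[j _ j_notin_S1]] := boolP ([set: 'I_N] \subset S1).
  have t1_full : t1 \in [pred t | full_bc_packet t == Some k].
    by rewrite inE /full_bc_packet bc_t1 -subTset S1_full.
  by rewrite -add1n leq_add //; apply/card_gt0P; exists t1.
have [t2 [S2 [bc_t2 j_in_S2]]] := delivered j.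
have t2_k : t2 \in [pred t | bc_packet t == Some k] by rewrite inE /bc_packet bc_t2.
have t1_neq_t2 : t1 != t2.
  by apply: contraNneq j_notin_S1 => eq_t; move: bc_t2; rewrite -eq_t bc_t1 => -[->].
by rewrite -[2]addn0 leq_add //; apply/card_gt1P; exists t1, t2.
Qed.

Lemma uc_packet_slot j k :
  (exists t, uc t = Some (j, k)) -> 1 <= \sum_t (uc_packet j t == Some k).
Proof.
case=> t uc_t; rewrite sum_nat_of_bool; apply/card_gt0P; exists t.
by rewrite unfold_in /uc_packet uc_t !eqxx.
Qed.

Lemma bc_packets_per_slot m t : \sum_(0 <= k < m) (bc_packet t == Some k) <= 1.
Proof. exact: leq_trans (sum_eq_Some_le _ (iota_uniq _ _)) (leq_b1 _). Qed.

Hypothesis valid : valid_frame bc uc.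

Lemma input2_packets_per_slot n0 (n : 'I_N -> nat) t :
  \sum_(0 <= k < n0) (full_bc_packet t == Some k)
    + \sum_j \sum_(0 <= k < n j) (uc_packet j t == Some k) <= 1.
Proof.
case uc_t: (uc t) => [[j' p]|]; last first.
  rewrite [X in _ + X]big1 => [|j _]; last by rewrite big1 // => k _; rewrite /uc_packet uc_t.
  by rewrite addn0 (leq_trans (sum_eq_Some_le _ (iota_uniq _ _))) ?leq_b1.
have -> : full_bc_packet t = None.
  rewrite /full_bc_packet; case bc_t: (bc t) => [[k fanout]|] //.
  by case: eqP => // full; have := valid bc_t uc_t; rewrite full inE.
rewrite big1 // add0n.
apply: leq_trans (_ : \sum_j (Some j' == Some j) <= 1); last first.
  exact: leq_trans (sum_eq_Some_le _ (index_enum_uniq _)) (leq_b1 _).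
apply: leq_sum => j _; apply: leq_trans (sum_eq_Some_le _ (iota_uniq _ _)) _.
by rewrite /uc_packet uc_t; case: (j' =P j) => [->|_]; rewrite ?eqxx.
Qed.

Lemma frame_capacity n0 (n : 'I_N -> nat) :
  0 < N -> frame_delivers bc uc n0 n -> 2 * n0 + \sum_j n j <= 2 * F.
Proof.
move=> N_gt0 [bc_delivered uc_delivered].
have bc_lower : n0 * 2 <= \sum_(0 <= k < n0)
    (\sum_t (bc_packet t == Some k) + \sum_t (full_bc_packet t == Some k)).
  by apply: leq_mul_sum_nat => k lt_k; apply: bc_packet_cost (bc_delivered k lt_k).
have uc_lower : \sum_j n j <= \sum_j \sum_(0 <= k < n j) \sum_t (uc_packet j t == Some k).
  apply: leq_sum => j _; rewrite -[X in X <= _]muln1.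
  by apply: leq_mul_sum_nat => k lt_k; apply: uc_packet_slot (uc_delivered j k lt_k).
have input1_load : \sum_(0 <= k < n0) \sum_t (bc_packet t == Some k) <= F.
  by rewrite exchange_big sum_ord_le // => t; apply: bc_packets_per_slot.
have input2_load : \sum_(0 <= k < n0) \sum_t (full_bc_packet t == Some k)
    + \sum_j \sum_(0 <= k < n j) \sum_t (uc_packet j t == Some k) <= F.
  under [X in _ + X]eq_bigr => j _ do rewrite exchange_big.
  rewrite exchange_big [X in _ + X]exchange_big -big_split sum_ord_le // => t.
  exact: input2_packets_per_slot.
rewrite big_split /= in bc_lower.
rewrite mulnC mul2n -addnn (leq_trans (leq_add bc_lower uc_lower)) //.
by rewrite -addnA leq_add.
Qed.

End FrameCount.

Local Open Scope ring_scope.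

Lemma in_Rfs_capacity (N : nat) (r0 : rat) (r : 'I_N -> rat) :
  (0 < N)%N -> in_Rfs r0 r -> 2 * r0 + \sum_i r i <= 2.
Proof.
move=> N_gt0 [F [n0 [n [F_gt0 r0F rF [bc [uc [valid delivered]]]]]]].
have := frame_capacity valid N_gt0 delivered.
rewrite -(ler_nat rat) natrD !natrM natr_sum -r0F.
under eq_bigr => i _ do rewrite -rF.
by rewrite -mulr_suml mulrA -mulrDl ler_pM2r ?ltr0n.
Qed.

Theorem corollary5 (N : nat) (s : rat) :
  (0 < N)%N -> 0 < s ->
  (forall (r0 : rat) (r : 'I_N -> rat), admissible r0 r ->
     in_Rfs (r0 / s) (fun i => r i / s)) ->
  3%:R / 2%:R - 1 / N%:R <= s.
Proof.
move=> N_gt0 s_gt0 sustainable.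
have N_pos : 0 < N%:R :> rat by rewrite ltr0n.
set a := 1 / N%:R.
have a_ge0 : 0 <= a by rewrite /a divr_ge0 ?ler0n.
have a_le1 : a <= 1 by rewrite /a ler_pdivrMr // mul1r ler1n.
have Na : N%:R * a = 1 by rewrite /a mul1r divff // gt_eqF.
have adm : admissible (1 - a) (fun _ : 'I_N => a).
  split=> [||//|| _]; try lra.
  by rewrite sumr_const card_ord -mulr_natl Na.
have sum_rates : \sum_(i < N) a / s = 1 / s.
  by rewrite sumr_const card_ord -mulr_natl mulrA Na.
have := in_Rfs_capacity N_gt0 (sustainable _ _ adm); rewrite sum_rates.
have -> : 2 * ((1 - a) / s) + 1 / s = (3 - 2 * a) / s by field; rewrite gt_eqF.
rewrite ler_pdivrMr // => load; lra.
Qed.
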